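(* Let $(\Omega,\mathcal{F})$ be a measurable space, $\mathrm{B}_b$ the space of bounded real-valued measurable functions on $\Omega$, and $C\subset\mathrm{B}_b$ a linear subspace containing all constant functions. Let $H\colon C\to\mathbb{R}$ be a convex premium principle and let $R_{\mathrm{Max}}(X):=\inf\{H(X_0)\mid X_0\in C,\ X_0\ge X\}$ for $X\in\mathrm{B}_b$. Then $$R_{\mathrm{Max}}(X)=\max_{\mathbb{P}\in\mathrm{ba}_+^1}\big(\mathbb{E}_{\mathbb{P}}(X)-H^*(\mathbb{P})\big)\quad\text{for all }X\in\mathrm{B}_b,$$ and $$H^*(\mathbb{P})=\sup_{X\in\mathrm{B}_b}\big(\mathbb{E}_{\mathbb{P}}(X)-R_{\mathrm{Max}}(X)\big)\quad\text{for all }\mathbb{P}\in\mathrm{ba}_+^1.$$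
   Context: A premium principle is a map $H\colon C\to\mathbb{R}$ with $H(X+m)=H(X)+m$ for $X\in C$, $m\in\mathbb{R}$, $H(0)=0$, and $H(X)\ge 0$ for $X\in C$ with $X\ge 0$ (pointwise order). $H$ is convex if $H(\lambda X+(1-\lambda)Y)\le\lambda H(X)+(1-\lambda)H(Y)$ for $\lambda\in[0,1]$, $X,Y\in C$. $\mathrm{ba}_+^1$ denotes the set of finitely additive probability measures on $(\Omega,\mathcal{F})$, $\mathbb{E}_{\mathbb{P}}$ the corresponding integral of bounded measurable functions, and $H^*(\mathbb{P}):=\sup_{X\in C}(\mathbb{E}_{\mathbb{P}}(X)-H(X))\in[0,\infty]$. *)

From HB Require Import structures.
From mathcomp Require Import all_boot all_order all_algebra.
From mathcomp Require Import all_classical all_reals all_analysis.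
Set Implicit Arguments. Unset Strict Implicit. Unset Printing Implicit Defensive.
Import Order.TTheory GRing.Theory Num.Theory.
Local Open Scope classical_set_scope.
Local Open Scope ring_scope.

Section Defs.
Context {d : measure_display} {T : measurableType d} {R : realType}.

Definition Bb : set (T -> R) :=
  [set f : T -> R | measurable_fun setT f /\ exists M : R, forall x, `|f x| <= M].

Definition linear_subspace_with_constants (C : set (T -> R)) : Prop :=
  C `<=` Bb /\
  (forall f g, C f -> C g -> C (f \+ g)) /\
  (forall (a : R) f, C f -> C (fun x => a * f x)) /\
  (forall c : R, C (cst c)).

Definition pw_le (X Y : T -> R) : Prop := forall x, X x <= Y x.

Definition premium_principle (C : set (T -> R)) (H : (T -> R) -> R) : Prop :=
  (forall X (m : R), C X -> H (fun x => X x + m) = H X + m) /\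
  H (cst 0) = 0 /\
  (forall X, C X -> pw_le (cst 0) X -> 0 <= H X).

Definition convex_on (C : set (T -> R)) (H : (T -> R) -> R) : Prop :=
  forall (l : R) X Y, 0 <= l <= 1 -> C X -> C Y ->
    H (fun x => l * X x + (1 - l) * Y x) <= l * H X + (1 - l) * H Y.

(* ba_+^1 : finitely additive probability measures on (Omega, F)
   (only the values on measurable sets matter) *)
Definition ba_prob (P : set T -> R) : Prop :=
  P setT = 1 /\
  (forall A, measurable A -> 0 <= P A) /\
  (forall A B, measurable A -> measurable B -> A `&` B = set0 ->
     P (A `|` B) = P A + P B).

Definition ba_integral (P : set T -> R) (X : T -> R) : R :=
  sup [set r | exists (n : nat) (c : 'I_n -> R) (A : 'I_n -> set T),
         (forall i, measurable (A i)) /\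
         (forall x, \sum_(i < n) c i * \1_(A i) x <= X x) /\
         r = \sum_(i < n) c i * P (A i)].

Definition Hstar (C : set (T -> R)) (H : (T -> R) -> R) (P : set T -> R)
  : \bar R :=
  ereal_sup [set ((ba_integral P X - H X)%:E) | X in C].

Definition RMax (C : set (T -> R)) (H : (T -> R) -> R) (X : T -> R) : R :=
  inf [set H X0 | X0 in [set X0 | C X0 /\ pw_le X X0]].

End Defs.

(* R_Max is convex, monotone and cash-additive on B_b, and R_Max <= H on C.
   Weak duality E_P(X) - H^*(P) <= R_Max(X) holds because
   E_P(X) <= E_P(X0) <= H(X0) + H^*(P) for every X0 in C dominating X; together
   with R_Max <= H on C it gives the formula for H^*.  For attainment, apply the
   Hahn-Banach theorem (a minimal sublinear functional below a given one, which
   exists by Zorn's lemma, is linear) to the directional derivative of R_Max at X: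
   this yields a subgradient l of R_Max at X.  Monotonicity and cash additivity
   make l positive with l(c) = c, so P(A) := l(1_A) is a finitely additive
   probability with E_P = l, and the subgradient inequality gives
   H^*(P) <= l(X) - R_Max(X). *)

From HB Require Import structures.
From mathcomp Require Import all_boot all_order all_algebra.
From mathcomp Require Import all_classical all_reals all_analysis.
From mathcomp Require Import ring lra measurable_realfun.
Set Implicit Arguments. Unset Strict Implicit. Unset Printing Implicit Defensive.
Import Order.TTheory GRing.Theory Num.Theory.
Local Open Scope classical_set_scope.
Local Open Scope ring_scope.

Section inf_lemmas.
Context {R : realType}.
Implicit Types (A B : set R).

Lemma le_inf_add A B c : A !=set0 -> B !=set0 ->
  (forall a b, A a -> B b -> c <= a + b) -> c <= inf A + inf B.
Proof.
move=> A0 B0 cAB; rewrite -lerBlDl; apply: lb_le_inf => // b Bb.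
rewrite lerBlDl -lerBlDr; apply: lb_le_inf => // a Aa.
by rewrite lerBlDr cAB.
Qed.

Lemma inf_scale (a : R) A : 0 < a -> A !=set0 -> has_lbound A ->
  inf [set a * x | x in A] = a * inf A.
Proof.
move=> a0 [x0 Ax0] [m Am]; apply/eqP; rewrite eq_le; apply/andP; split.
  rewrite -ler_pdivrMl //; apply: lb_le_inf; first by exists x0.
  move=> x Ax; rewrite ler_pdivrMl //; apply: ge_inf; last by exists x.
  by exists (a * m) => _ [y Ay <-]; rewrite ler_pM2l // Am.
apply: lb_le_inf; first by exists (a * x0), x0.
by move=> _ [x Ax <-]; rewrite ler_pM2l // ge_inf //; exists m.
Qed.

End inf_lemmas.

Section sublinear_functionals.
Context {R : realType} {V : lmodType R}.
Variable D : set V.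
Hypotheses (D0 : D 0) (DD : forall u v, D u -> D v -> D (u + v))
  (DZ : forall (a : R) v, D v -> D (a *: v)).

Definition le_on (f g : V -> R) := forall v, D v -> f v <= g v.

Definition sublinear_on (q : V -> R) :=
  (forall u v, D u -> D v -> q (u + v) <= q u + q v) /\
  (forall (a : R) v, 0 < a -> D v -> q (a *: v) = a * q v).

Definition sublinear_minorant (p q : V -> R) := sublinear_on q /\ le_on q p.

Definition linear_on (l : V -> R) :=
  (forall u v, D u -> D v -> l (u + v) = l u + l v) /\
  (forall (a : R) v, D v -> l (a *: v) = a * l v).

Lemma scale_closedN v : D v -> D (- v).
Proof. by rewrite -scaleN1r; exact: DZ. Qed.

Lemma linear_on_sum l n (c : 'I_n -> R) (f : 'I_n -> V) :
  linear_on l -> (forall i, D (f i)) ->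
  D (\sum_(i < n) c i *: f i) /\ l (\sum_(i < n) c i *: f i) = \sum_(i < n) c i * l (f i).
Proof.
case=> ladd lZ Df; apply: (big_ind2 (fun v r => D v /\ l v = r)).
- by split=> //; rewrite -(scale0r 0) lZ // mul0r.
- by move=> u r v s [Du <-] [Dv <-]; split; [exact: DD | exact: ladd].
- by move=> i _; split; [exact: DZ | exact: lZ].
Qed.

Lemma linear_onN l v : linear_on l -> D v -> l (- v) = - l v.
Proof. by move=> [_ lZ] Dv; rewrite -mulN1r -lZ // scaleN1r. Qed.

Lemma linear_onB l u v : linear_on l -> D u -> D v -> l (u - v) = l u - l v.
Proof.
move=> l_lin Du Dv; rewrite l_lin.1 ?linear_onN //; exact: scale_closedN.
Qed.

Lemma sublinear_on0 q : sublinear_on q -> q 0 = 0.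
Proof.
case=> _ qZ; have two_gt0 : (0 : R) < 2 by lra.
by have := qZ 2 0 two_gt0 D0; rewrite scaler0; lra.
Qed.

Lemma sublinear_on_nneg_scale q (a : R) v : sublinear_on q -> 0 <= a -> D v ->
  q (a *: v) = a * q v.
Proof.
move=> qsub; rewrite le_eqVlt => /predU1P[<- _|a_gt0 Dv]; last exact: qsub.2.
by rewrite scale0r mul0r sublinear_on0.
Qed.

Lemma sublinear_on_oppN q v : sublinear_on q -> D v -> - q (- v) <= q v.
Proof.
move=> qsub Dv; have := qsub.1 _ _ Dv (scale_closedN Dv).
by rewrite subrr sublinear_on0 //; lra.
Qed.

Lemma additive_sublinear_linear q : sublinear_on q ->
  (forall u v, D u -> D v -> q (u + v) = q u + q v) -> linear_on q.
Proof.
move=> qsub qadd; split=> // a v Dv.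
have qN : q (- v) = - q v.
  by have := qadd v (- v) Dv (scale_closedN Dv); rewrite subrr sublinear_on0 //; lra.
have [a_lt0|a_gt0|->] := ltgtP a 0; last by rewrite scale0r mul0r sublinear_on0.
- rewrite -[in LHS](opprK a) scaleNr -scalerN qsub.2 ?oppr_gt0 //; last exact: scale_closedN.
  by rewrite qN mulrNN.
- exact: qsub.2.
Qed.

Section inf_along.
Variables (q : V -> R) (x : V).
Hypotheses (qsub : sublinear_on q) (Dx : D x).

Definition inf_along w := inf [set q (w + r *: x) - r * q x | r in [set r : R | 0 <= r]].

Let along_nonempty w : [set q (w + r *: x) - r * q x | r in [set r : R | 0 <= r]] !=set0.
Proof. by exists (q (w + 0 *: x) - 0 * q x), 0 => /=. Qed.

Let along_has_lbound w : D w ->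
  has_lbound [set q (w + r *: x) - r * q x | r in [set r : R | 0 <= r]].
Proof.
move=> Dw; exists (- q (- w)) => _ [r r_ge0 <-].
have := qsub.1 _ _ (DD Dw (DZ r Dx)) (scale_closedN Dw).
by rewrite addrAC subrr add0r sublinear_on_nneg_scale //; lra.
Qed.

Lemma inf_along_le w r : D w -> 0 <= r -> inf_along w <= q (w + r *: x) - r * q x.
Proof. by move=> Dw r_ge0; apply: ge_inf; [exact: along_has_lbound | exists r]. Qed.

Lemma inf_along_sublinear : sublinear_on inf_along.
Proof.
split=> [f g Df Dg|a v a_gt0 Dv].
  apply: le_inf_add => // _ _ [r1 r1_ge0 <-] [r2 r2_ge0 <-].
  apply: le_trans (inf_along_le (DD Df Dg) (addr_ge0 r1_ge0 r2_ge0)) _.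
  have := qsub.1 _ _ (DD Df (DZ r1 Dx)) (DD Dg (DZ r2 Dx)).
  by rewrite addrACA -scalerDl; lra.
rewrite /inf_along -inf_scale //; last exact: along_has_lbound.
congr inf; apply/seteqP; split=> [_ [r r_ge0 <-]|_ [_ [r r_ge0 <-] <-]].
  exists (q (v + (r / a) *: x) - r / a * q x).
    by exists (r / a) => //; exact: divr_ge0 r_ge0 (ltW a_gt0).
  have -> : a *: v + r *: x = a *: (v + (r / a) *: x).
    by rewrite scalerDr scalerA mulrCA divff ?gt_eqF // mulr1.
  rewrite qsub.2 //; last exact: DD Dv (DZ _ Dx).
  by field; rewrite gt_eqF.
exists (a * r); first exact: mulr_ge0 (ltW a_gt0) r_ge0.
rewrite -scalerA -scalerDr qsub.2 //; last exact: DD Dv (DZ r Dx).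
by ring.
Qed.

End inf_along.

(* Minimality against [inf_along q u] gives q v <= q (v + u) - q u. *)
Lemma minimal_sublinear_additive q : sublinear_on q ->
  (forall q', sublinear_on q' -> le_on q' q -> le_on q q') ->
  forall u v, D u -> D v -> q (u + v) = q u + q v.
Proof.
move=> qsub qmin u v Du Dv; apply/eqP; rewrite eq_le qsub.1 //=.
have along_le_q : le_on (inf_along q u) q.
  move=> w Dw; have := inf_along_le qsub Du Dw (lexx 0).
  by rewrite scale0r addr0 mul0r subr0.
have := qmin _ (inf_along_sublinear qsub Du) along_le_q v Dv.
move/le_trans/(_ (inf_along_le qsub Du Dv ler01)).
by rewrite scale1r mul1r (addrC v u); lra.
Qed.

Lemma inf_chain_sublinear_minorant (p : V -> R) (A : set (V -> R)) : sublinear_on p ->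
  A !=set0 -> A `<=` sublinear_minorant p -> total_on A le_on ->
  let m v := inf [set q v | q in A] in
  sublinear_minorant p m /\ forall q, A q -> le_on m q.
Proof.
move=> psub [q0 Aq0] Amin Atot m.
have img0 v : [set q v | q in A] !=set0 by exists (q0 v), q0.
have img_lb v : D v -> has_lbound [set q v | q in A].
  move=> Dv; exists (- p (- v)) => _ [q /Amin[qsub qp] <-].
  by apply: le_trans (sublinear_on_oppN qsub Dv); rewrite lerN2; exact: qp (scale_closedN Dv).
have m_le q : A q -> le_on m q.
  by move=> Aq v Dv; apply: ge_inf; [exact: img_lb | exists q].
split=> //; split; last first.
  by move=> v Dv; apply: le_trans (m_le q0 Aq0 v Dv) _; exact: (Amin q0 Aq0).2.
split=> [u v Du Dv|a v a_gt0 Dv].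
  apply: le_inf_add => // _ _ [q1 Aq1 <-] [q2 Aq2 <-].
  have [q12|q21] := Atot q1 q2 Aq1 Aq2.
  - apply: le_trans (m_le q1 Aq1 _ (DD Du Dv)) _.
    by apply: le_trans ((Amin q1 Aq1).1.1 u v Du Dv) _; rewrite lerD2l q12.
  - apply: le_trans (m_le q2 Aq2 _ (DD Du Dv)) _.
    by apply: le_trans ((Amin q2 Aq2).1.1 u v Du Dv) _; rewrite lerD2r q21.
rewrite /m -inf_scale //; last exact: img_lb.
by congr inf; rewrite image_comp; apply: eq_imagel => q /Amin[[_ qZ] _] /=; exact: qZ.
Qed.

Lemma exists_minimal_sublinear_minorant p : sublinear_on p ->
  exists2 q, sublinear_minorant p q &
    forall q', sublinear_on q' -> le_on q' q -> le_on q q'.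
Proof.
move=> psub; pose Q := {q : V -> R | sublinear_minorant p q}.
pose above (q q' : Q) := `[< le_on (sval q') (sval q) >].
(* Zorn for the reverse pointwise order: a chain is bounded by its pointwise infimum. *)
have pQ : sublinear_minorant p p by split=> // v _.
have [[q qQ] qmax] : exists t, premaximal above t.
  apply: (ZL_preorder (exist _ p pQ)) => [t|r s t /asboolP rs /asboolP st|B Btot].
  - exact/asboolP.
  - by apply/asboolP => v Dv; apply: le_trans (st v Dv) (rs v Dv).
  have [[q0 Bq0]|B0] := pselect (B !=set0); last first.
    by exists (exist _ p pQ) => s Bs; exfalso; apply: B0; exists s.
  have B'0 : sval @` B !=set0 by exists (sval q0), q0.
  have B'Q : sval @` B `<=` sublinear_minorant p by move=> _ [s _ <-]; exact: (svalP s).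
  have B'tot : total_on (sval @` B) le_on.
    move=> _ _ [s Bs <-] [t Bt <-].
    by have [/asboolP|/asboolP] := Btot s t Bs Bt; [right|left].
  have [mQ m_le] := inf_chain_sublinear_minorant psub B'0 B'Q B'tot.
  by exists (exist _ _ mQ : Q) => s Bs; apply/asboolP; apply: m_le; exists s.
exists q => // q' q'sub q'q.
have q'Q : sublinear_minorant p q'.
  by split=> // v Dv; apply: le_trans (q'q v Dv) (qQ.2 v Dv).
by apply/asboolP; apply: (qmax (exist _ q' q'Q)); apply/asboolP.
Qed.

Theorem hahn_banach_on (p : V -> R) : sublinear_on p ->
  exists2 l, linear_on l & le_on l p.
Proof.
move=> /exists_minimal_sublinear_minorant[q [qsub qp] qmin].
exists q => //; apply: additive_sublinear_linear => //.
exact: minimal_sublinear_additive.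
Qed.

End sublinear_functionals.

Section convex_subgradient.
Context {R : realType} {V : lmodType R}.
Variable D : set V.
Hypotheses (D0 : D 0) (DD : forall u v, D u -> D v -> D (u + v))
  (DZ : forall (a : R) v, D v -> D (a *: v)).
Variable rho : V -> R.
Hypothesis rho_convex : forall u v (t : R), D u -> D v -> 0 <= t <= 1 ->
  rho (t *: u + (1 - t) *: v) <= t * rho u + (1 - t) * rho v.
Variable x0 : V.
Hypothesis Dx0 : D x0.

Lemma convex_combination_translate (a : R) (x u w : V) :
  a *: (x + u) + (1 - a) *: (x + w) = x + (a *: u + (1 - a) *: w).
Proof. by rewrite !scalerDr addrACA -scalerDl subrKC scale1r. Qed.

Let slope h t := (rho (x0 + t *: h) - rho x0) / t.

Let slope_nondecreasing h s t : D h -> 0 < s -> s <= t -> slope h s <= slope h t.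
Proof.
move=> Dh s_gt0 st; have t_gt0 := lt_le_trans s_gt0 st.
have st01 : 0 <= s / t <= 1.
  by apply/andP; split; [rewrite divr_ge0 // ltW | rewrite ler_pdivrMr // mul1r].
have := rho_convex (DD Dx0 (DZ t Dh)) (DD Dx0 D0) st01.
rewrite convex_combination_translate scalerA mulfVK ?gt_eqF // scaler0 !addr0.
rewrite /slope ler_pdivrMr // => conv.
have -> : (rho (x0 + t *: h) - rho x0) / t * s = s / t * (rho (x0 + t *: h) - rho x0).
  by field; rewrite gt_eqF.
lra.
Qed.

(* x0 is the convex combination of x0 + t h and x0 - h with weights 1/(1+t) and t/(1+t). *)
Let slope_ge h t : D h -> 0 < t -> rho x0 - rho (x0 - h) <= slope h t.
Proof.
move=> Dh t_gt0; have t1_gt0 : 0 < 1 + t by lra.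
set l := (1 + t)^-1; have l_gt0 : 0 < l by rewrite invr_gt0.
have l_inv : l * (1 + t) = 1 by rewrite mulVf // gt_eqF.
have l01 : 0 <= l <= 1.
  by apply/andP; split; [exact: ltW | rewrite invr_le1 ?unitfE ?gt_eqF //; lra].
have := rho_convex (DD Dx0 (DZ t Dh)) (DD Dx0 (scale_closedN DZ Dh)) l01.
rewrite convex_combination_translate scalerN scalerA -scaleNr -scalerDl.
have -> : l * t + - (1 - l) = 0 by rewrite mulrDr mulr1 in l_inv; lra.
rewrite scale0r addr0 /slope ler_pdivlMr // => /(ler_wpM2r (ltW t1_gt0)).
have l'_inv : (1 - l) * (1 + t) = t by rewrite mulrBl mul1r l_inv; lra.
by rewrite mulrDl [l * _ * _]mulrAC [(1 - l) * _ * _]mulrAC l_inv l'_inv; lra.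
Qed.

Let slope_add_half f g t : D f -> D g -> 0 < t ->
  slope (f + g) (t / 2) <= slope f t + slope g t.
Proof.
move=> Df Dg t_gt0; have half01 : 0 <= (2^-1 : R) <= 1 by apply/andP; split; lra.
have := rho_convex (DD Dx0 (DZ t Df)) (DD Dx0 (DZ t Dg)) half01.
rewrite convex_combination_translate.
have -> : 1 - 2^-1 = 2^-1 :> R by lra.
rewrite !scalerA -scalerDr (mulrC _ t) => conv.
rewrite /slope -mulrDl; have -> : (t / 2)^-1 = 2 * t^-1 by rewrite invfM invrK mulrC.
rewrite mulrA; apply: ler_wpM2r; [by rewrite invr_ge0 ltW | lra].
Qed.

Let slope_scale a h t : 0 < a -> 0 < t -> slope (a *: h) t = a * slope h (a * t).
Proof.
by move=> a_gt0 t_gt0; rewrite /slope scalerA (mulrC t); field; rewrite !gt_eqF.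
Qed.

Let dir_deriv h := inf [set slope h t | t in [set t | 0 < t]].

Let dir_deriv_nonempty h : [set slope h t | t in [set t | 0 < t]] !=set0.
Proof. by exists (slope h 1), 1 => //=; exact: ltr01. Qed.

Let dir_deriv_has_lbound h : D h -> has_lbound [set slope h t | t in [set t | 0 < t]].
Proof.
by move=> Dh; exists (rho x0 - rho (x0 - h)) => _ [t t_gt0 <-]; exact: slope_ge.
Qed.

Let dir_deriv_le h t : D h -> 0 < t -> dir_deriv h <= slope h t.
Proof.
by move=> Dh t_gt0; apply: ge_inf; [exact: dir_deriv_has_lbound | exists t].
Qed.

Let dir_deriv_sublinear : sublinear_on D dir_deriv.
Proof.
split=> [f g Df Dg|a h a_gt0 Dh].
  apply: le_inf_add => // _ _ [s s_gt0 <-] [u u_gt0 <-].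
  have v_gt0 : 0 < Num.min s u by rewrite lt_min s_gt0.
  apply: le_trans (dir_deriv_le (DD Df Dg) (_ : 0 < Num.min s u / 2)) _.
    by rewrite divr_gt0.
  apply: le_trans (slope_add_half Df Dg v_gt0) _.
  by apply: lerD; apply: slope_nondecreasing; rewrite // ge_min lexx ?orbT.
rewrite /dir_deriv -inf_scale //; last exact: dir_deriv_has_lbound.
congr inf; apply/seteqP; split=> [_ [t t_gt0 <-]|_ [_ [t t_gt0 <-] <-]].
  exists (slope h (a * t)); last by rewrite slope_scale.
  by exists (a * t) => //; exact: mulr_gt0.
exists (t / a); first exact: divr_gt0.
by rewrite slope_scale ?divr_gt0 // [a * (t / a)]mulrC divfK ?gt_eqF.
Qed.

Theorem convex_subgradient :
  exists2 l, linear_on D l & forall h, D h -> l h <= rho (x0 + h) - rho x0.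
Proof.
have [l l_lin l_le] := hahn_banach_on D0 DD DZ dir_deriv_sublinear.
exists l => // h Dh; apply: le_trans (l_le h Dh) _.
by apply: le_trans (dir_deriv_le Dh ltr01) _; rewrite /slope scale1r divr1.
Qed.

End convex_subgradient.

Lemma staircase_sum {R : realType} (e y : R) N : 0 < e -> 0 <= y < N%:R * e ->
  let s := \sum_(i < N) e * (i.+1%:R * e <= y)%R%:R in s <= y /\ y < s + e.
Proof.
move=> e_gt0 /andP[y_ge0 y_lt] s.
(* Either all N steps lie below y, or y lies within e above the last step reached. *)
suff : (s = N%:R * e /\ N%:R * e <= y) \/ (s <= N%:R * e /\ s <= y < s + e).
  by case=> [[_ Ny]|[_ sys]]; lra.
rewrite {}/s {y_lt}; elim: N => [|N IH]; first by left; rewrite big_ord0 mul0r.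
rewrite big_ord_recr /= -[N.+1]addn1 natrD mulrDl mul1r.
set s := \sum_(i < N) _ in IH *.
have [step|step] := leP (N%:R * e + e) y; rewrite ?mulr1 ?mulr0 ?addr0.
- case: IH => [[-> _]|[sN /andP[_ ys]]]; [by left | lra].
- by case: IH => [[-> Ny]|[sN /andP[sy ys]]]; right; split; lra.
Qed.

Lemma indic_boolE {T : Type} {R : realType} (b : T -> bool) x :
  \1_[set y | b y] x = (b x)%:R :> R.
Proof. by rewrite indicE mem_setE. Qed.

Section bounded_measurable_functions.
Context {d : measure_display} {T : measurableType d} {R : realType}.
Implicit Types (f g X : T -> R).

Lemma Bb_add f g : Bb f -> Bb g -> Bb (f + g).
Proof.
move=> [mf [M fM]] [mg [N gN]]; split; first exact: measurable_funD.
by exists (M + N) => x; apply: le_trans (ler_normD _ _) _; exact: lerD.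
Qed.

Lemma Bb_scale (a : R) f : Bb f -> Bb (a *: f).
Proof.
move=> [mf [M fM]]; split; first exact: measurable_funM.
by exists (`|a| * M) => x; rewrite normrM ler_wpM2l.
Qed.

Lemma Bb_opp f : Bb f -> Bb (- f).
Proof. by rewrite -scaleN1r; exact: Bb_scale. Qed.

Lemma Bb_cst (c : R) : Bb (cst c : T -> R).
Proof. by split; [exact: measurable_cst | exists `|c|]. Qed.

Lemma Bb0 : Bb (0 : T -> R). Proof. exact: Bb_cst. Qed.

Lemma Bb_indic (A : set T) : measurable A -> Bb (\1_A : T -> R).
Proof.
move=> mA; split; first exact: measurable_indic.
by exists 1 => x; rewrite indicE; case: (_ \in _); rewrite ?normr1 ?normr0.
Qed.

Lemma Bb_bounded X : Bb X -> exists M, forall x, - M <= X x <= M.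
Proof. by move=> [_ [M XM]]; exists M => x; rewrite -ler_norml. Qed.

Lemma Bb_measurable_ge X (a : R) : Bb X -> measurable [set x | a <= X x].
Proof.
move=> [mX _]; have := mX measurableT _ (measurable_itv `[a, +oo[).
by rewrite setTI preimage_itvcy.
Qed.

End bounded_measurable_functions.

Section finitely_additive_probability.
Context {d : measure_display} {T : measurableType d} {R : realType}.
Variable P : set T -> R.
Hypothesis hP : ba_prob P.

Lemma ba_prob0 : P set0 = 0.
Proof.
have := hP.2.2 _ _ measurable0 measurable0 (setI0 set0).
by rewrite setU0; lra.
Qed.

Lemma ba_prob_split (A B : set T) : measurable A -> measurable B ->
  P B = P (B `&` A) + P (B `&` ~` A).
Proof.
move=> mA mB; rewrite -hP.2.2; first by rewrite -setIUr setUCr setIT.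
- exact: measurableI.
- exact: measurableI (measurableC _).
by rewrite setIACA setICr setI0.
Qed.

Lemma ba_simple_sum_le_on n (c : 'I_n -> R) (A : 'I_n -> set T) (B : set T) (M : R) :
  (forall i, measurable (A i)) -> measurable B ->
  (forall x, B x -> \sum_(i < n) c i * \1_(A i) x <= M) ->
  \sum_(i < n) c i * P (A i `&` B) <= M * P B.
Proof.
elim: n c A B M => [|n IH] c A B M mA mB sM.
  rewrite big_ord0; have [->|/set0P[x Bx]] := eqVneq B set0; first by rewrite ba_prob0 mulr0.
  by apply: mulr_ge0; [move: (sM x Bx); rewrite big_ord0 | exact: hP.2.1].
pose c' i := c (widen_ord (leqnSn n) i); pose A' i := A (widen_ord (leqnSn n) i).
have mA' i : measurable (A' i) by exact: mA.
have mAn := mA ord_max; have mBA := measurableI _ _ mB mAn.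
have mBAc := measurableI _ _ mB (measurableC mAn).
have in_An := IH c' A' _ (M - c ord_max) mA' mBA.
have out_An := IH c' A' _ M mA' mBAc.
have {}in_An : \sum_(i < n) c' i * P (A' i `&` (B `&` A ord_max)) <=
    (M - c ord_max) * P (B `&` A ord_max).
  apply: in_An => x [Bx Anx]; have := sM x Bx.
  by rewrite big_ord_recr /= indicE mem_set // mulr1 lerBrDr.
have {}out_An : \sum_(i < n) c' i * P (A' i `&` (B `&` ~` A ord_max)) <=
    M * P (B `&` ~` A ord_max).
  apply: out_An => x [Bx Anx]; have := sM x Bx.
  by rewrite big_ord_recr /= indicE memNset // mulr0 addr0.
rewrite big_ord_recr /= (ba_prob_split mAn mB) [A ord_max `&` B]setIC.
have -> : \sum_(i < n) c (widen_ord (leqnSn n) i) * P (A (widen_ord (leqnSn n) i) `&` B)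
  = \sum_(i < n) c' i * P (A' i `&` (B `&` A ord_max)) +
    \sum_(i < n) c' i * P (A' i `&` (B `&` ~` A ord_max)).
  rewrite -big_split /=; apply: eq_bigr => i _; rewrite -mulrDr !setIA.
  by rewrite -ba_prob_split //; exact: measurableI.
lra.
Qed.

Lemma ba_simple_sum_le n (c : 'I_n -> R) (A : 'I_n -> set T) (M : R) :
  (forall i, measurable (A i)) ->
  (forall x, \sum_(i < n) c i * \1_(A i) x <= M) ->
  \sum_(i < n) c i * P (A i) <= M.
Proof.
move=> mA sM; have := ba_simple_sum_le_on mA measurableT (fun x _ => sM x).
by rewrite hP.1 mulr1; under eq_bigr do rewrite setIT.
Qed.

Lemma ba_integral_ge n (c : 'I_n -> R) (A : 'I_n -> set T) X : Bb X ->
  (forall i, measurable (A i)) -> (forall x, \sum_(i < n) c i * \1_(A i) x <= X x) ->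
  \sum_(i < n) c i * P (A i) <= ba_integral P X.
Proof.
move=> /Bb_bounded[M XM] mA sX; apply: sup_upper_bound; last by exists n, c, A.
split; first by exists (\sum_(i < n) c i * P (A i)), n, c, A.
exists M => _ [m [c' [A' [mA' [sX' ->]]]]]; apply: ba_simple_sum_le => // x.
by apply: le_trans (sX' x) _; case/andP: (XM x).
Qed.

Lemma ba_integral_le X (m : R) : Bb X ->
  (forall n (c : 'I_n -> R) (A : 'I_n -> set T), (forall i, measurable (A i)) ->
     (forall x, \sum_(i < n) c i * \1_(A i) x <= X x) -> \sum_(i < n) c i * P (A i) <= m) ->
  ba_integral P X <= m.
Proof.
move=> /Bb_bounded[M XM] sm; apply: ge_sup => [|_ [n [c [A [mA [sX ->]]]]]]; last exact: sm.
exists (\sum_(i < 1) - M * P setT), 1%N, (fun=> - M), (fun=> setT); split=> //.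
by split=> // x; rewrite big_ord1 indicE mem_set // mulr1; case/andP: (XM x).
Qed.

Lemma ba_integral_le_le X Y : Bb X -> Bb Y -> (forall x, X x <= Y x) ->
  ba_integral P X <= ba_integral P Y.
Proof.
move=> bX bY XY; apply: ba_integral_le => // n c A mA sX.
by apply: ba_integral_ge => // x; apply: le_trans (sX x) (XY x).
Qed.

End finitely_additive_probability.

Section superhedging_price.
Context {d : measure_display} {T : measurableType d} {R : realType}.
Variables (C : set (T -> R)) (H : (T -> R) -> R).
Hypotheses (hC : linear_subspace_with_constants C) (hH : premium_principle C H)
  (H_convex : convex_on C H).
Implicit Types (X Y : T -> R).

Lemma C_Bb X : C X -> Bb X. Proof. exact: hC.1. Qed.

Lemma C_add_cst X (m : R) : C X -> C (X + cst m).
Proof. by move=> CX; apply: hC.2.1 CX (hC.2.2.2 m). Qed.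

Lemma H_ge X (m : R) : C X -> (forall x, m <= X x) -> m <= H X.
Proof.
move=> CX mX; have := hH.2.2 _ (C_add_cst (- m) CX).
rewrite hH.1 // subr_ge0; apply=> x; rewrite /cst subr_ge0; exact: mX.
Qed.

Let hedges X := [set H X0 | X0 in [set X0 | C X0 /\ pw_le X X0]].

Let hedges_nonempty X : Bb X -> hedges X !=set0.
Proof.
move=> /Bb_bounded[M XM]; exists (H (cst M)), (cst M) => //.
by split=> [|x]; [exact: hC.2.2.2 | case/andP: (XM x)].
Qed.

Let hedges_has_lbound X : Bb X -> has_lbound (hedges X).
Proof.
move=> /Bb_bounded[M XM]; exists (- M) => _ [X0 [CX0 XX0] <-].
by apply: H_ge => // x; apply: le_trans (XX0 x); case/andP: (XM x).
Qed.

Let hedges_has_inf X : Bb X -> has_inf (hedges X).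
Proof. by move=> bX; split; [exact: hedges_nonempty | exact: hedges_has_lbound]. Qed.

Lemma RMax_le_H X X0 : Bb X -> C X0 -> pw_le X X0 -> RMax C H X <= H X0.
Proof. by move=> bX CX0 XX0; apply: ge_inf; [exact: hedges_has_lbound | exists X0]. Qed.

Lemma RMax_ge X (m : R) : Bb X ->
  (forall X0, C X0 -> pw_le X X0 -> m <= H X0) -> m <= RMax C H X.
Proof.
move=> bX mH; apply: lb_le_inf; first exact: hedges_nonempty.
by move=> _ [X0 [CX0 XX0] <-]; exact: mH.
Qed.

Lemma RMax_le_le X Y : Bb X -> Bb Y -> (forall x, X x <= Y x) ->
  RMax C H X <= RMax C H Y.
Proof.
move=> bX bY XY; apply: RMax_ge => // Y0 CY0 YY0.
by apply: RMax_le_H => // x; apply: le_trans (XY x) (YY0 x).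
Qed.

Let RMax_add_cst_le X (m : R) : Bb X -> RMax C H (X + cst m) <= RMax C H X + m.
Proof.
move=> bX; rewrite -lerBlDr; apply: RMax_ge => // X0 CX0 XX0; rewrite lerBlDr -hH.1 //.
apply: RMax_le_H; [exact/Bb_add/Bb_cst | exact: C_add_cst | by move=> x; rewrite lerD2r].
Qed.

Lemma RMax_add_cst X (m : R) : Bb X -> RMax C H (X + cst m) = RMax C H X + m.
Proof.
move=> bX; apply/eqP; rewrite eq_le RMax_add_cst_le //=.
have XmK : X + cst m + cst (- m) = X by apply/funext => x; rewrite /= addrK.
by have := RMax_add_cst_le (- m) (Bb_add bX (Bb_cst m)); rewrite XmK; lra.
Qed.

Lemma RMax_convex X Y (t : R) : Bb X -> Bb Y -> 0 <= t <= 1 ->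
  RMax C H (t *: X + (1 - t) *: Y) <= t * RMax C H X + (1 - t) * RMax C H Y.
Proof.
move=> bX bY /[dup] t01 /andP[t_ge0 t_le1]; apply/ler_addgt0Pr => e e_gt0.
have [_ [X0 [CX0 XX0] <-] X0e] := inf_adherent e_gt0 (hedges_has_inf bX).
have [_ [Y0 [CY0 YY0] <-] Y0e] := inf_adherent e_gt0 (hedges_has_inf bY).
have CXY0 : C (t *: X0 + (1 - t) *: Y0) by apply: hC.2.1; apply: hC.2.2.1.
have XY0 : pw_le (t *: X + (1 - t) *: Y) (t *: X0 + (1 - t) *: Y0).
  by move=> x; apply: lerD; apply: ler_wpM2l; rewrite ?subr_ge0.
have := RMax_le_H (Bb_add (Bb_scale t bX) (Bb_scale (1 - t) bY)) CXY0 XY0.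
have := H_convex t01 CX0 CY0; rewrite -/(RMax C H X) -/(RMax C H Y) in X0e Y0e.
have : 0 <= 1 - t by rewrite subr_ge0.
nra.
Qed.

End superhedging_price.

Section functional_probability.
Context {d : measure_display} {T : measurableType d} {R : realType}.
Variable l : (T -> R) -> R.
Hypotheses (l_linear : linear_on Bb l) (l_cst : forall c : R, l (cst c) = c)
  (l_ge0 : forall h, Bb h -> (forall x, 0 <= h x) -> 0 <= l h).

Definition functional_prob (A : set T) : R := l \1_A.

Lemma functional_le_le X Y : Bb X -> Bb Y -> (forall x, X x <= Y x) -> l X <= l Y.
Proof.
move=> bX bY XY; rewrite -subr_ge0 -(linear_onB Bb_scale) //.
by apply: l_ge0 => [|x]; [exact/Bb_add/Bb_opp | rewrite /= subr_ge0].
Qed.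

Lemma ba_prob_functional : ba_prob functional_prob.
Proof.
split; first by rewrite /functional_prob indicT l_cst.
split=> [A mA|A B mA mB AB0].
  by apply: l_ge0 => [|x]; [exact: Bb_indic | rewrite indicE].
rewrite /functional_prob -l_linear.1; try exact: Bb_indic.
congr l; rewrite addrfctE; apply/funext => x; rewrite !indicE in_setU.
have [xA|xA] := boolP (x \in A); have [xB|xB] := boolP (x \in B);
  rewrite /= ?addr0 ?add0r //.
have : (A `&` B) x by split; exact: set_mem.
by rewrite AB0.
Qed.

Lemma functional_simple n (c : 'I_n -> R) (A : 'I_n -> set T) :
  (forall i, measurable (A i)) ->
  Bb (fun x => \sum_(i < n) c i * \1_(A i) x) /\
  l (fun x => \sum_(i < n) c i * \1_(A i) x) = \sum_(i < n) c i * functional_prob (A i).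
Proof.
move=> mA; have Dind i : Bb (\1_(A i) : T -> R) by exact: Bb_indic.
by have := linear_on_sum Bb0 Bb_add Bb_scale c l_linear Dind; rewrite fct_sumE.
Qed.

Lemma ba_integral_functional X : Bb X -> ba_integral functional_prob X = l X.
Proof.
move=> bX; apply/eqP; rewrite eq_le; apply/andP; split.
  apply: ba_integral_le => // n c A mA sX; have [bs <-] := functional_simple c mA.
  exact: functional_le_le.
apply/ler_addgt0Pr => e e_gt0; have [M XM] := Bb_bounded bX.
pose N := (Num.truncn (2 * M / e)).+1.
have MN : 2 * M < N%:R * e by rewrite -ltr_pdivrMr // truncnS_gt.
(* The staircase -M + e * #{i < N | -M + (i + 1) e <= X} is a simple function
   within e below X. *)
pose c (i : 'I_N.+1) := if val i == 0%N then - M else e.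
pose A (i : 'I_N.+1) := [set x | - M + i%:R * e <= X x].
have mA i : measurable (A i) by exact: Bb_measurable_ge.
have [bs ls] := functional_simple c mA.
set s := fun x => _ in bs ls.
have s_approx x : s x <= X x /\ X x <= s x + e.
  rewrite /s big_ord_recl /c /A /= indic_boolE mul0r addr0.
  have /andP[XMl XMr] := XM x; rewrite XMl mulr1.
  under eq_bigr => i _ do rewrite indic_boolE addrC lerBlDl.
  have /= [] := @staircase_sum R e (M + X x) N e_gt0; first by apply/andP; split; lra.
  lra.
have lX : l X <= l s + e.
  have := functional_le_le bX (Bb_add bs (Bb_cst e)) (fun x => (s_approx x).2).
  by rewrite l_linear.1 ?l_cst //; exact: Bb_cst.
apply: le_trans lX _; rewrite lerD2r ls.
by apply: (ba_integral_ge ba_prob_functional bX mA) => x; case: (s_approx x).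
Qed.

End functional_probability.

Lemma subgradient_cash_normalized {d : measure_display} {T : measurableType d} {R : realType}
    (rho l : (T -> R) -> R) (x0 : T -> R) :
  (forall X Y, Bb X -> Bb Y -> (forall x, X x <= Y x) -> rho X <= rho Y) ->
  (forall X (m : R), Bb X -> rho (X + cst m) = rho X + m) ->
  Bb x0 -> linear_on Bb l -> (forall h, Bb h -> l h <= rho (x0 + h) - rho x0) ->
  (forall c, l (cst c) = c) /\ (forall h, Bb h -> (forall x, 0 <= h x) -> 0 <= l h).
Proof.
move=> rho_mono rho_cash bx0 l_lin l_sub.
have l_le h (m : R) : Bb h -> (forall x, h x <= m) -> l h <= m.
  move=> bh hm; apply: le_trans (l_sub h bh) _; rewrite lerBlDl -rho_cash //.
  by apply: rho_mono => [||x]; [exact: Bb_add | exact/Bb_add/Bb_cst | rewrite lerD2l].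
have l_ge h (m : R) : Bb h -> (forall x, m <= h x) -> m <= l h.
  move=> bh mh; rewrite -lerN2 -(linear_onN l_lin) //.
  by apply: l_le => [|x]; [exact: Bb_opp | rewrite opprfctE lerN2].
split=> [c|h bh h_ge0]; last exact: l_ge.
by apply/eqP; rewrite eq_le l_le ?l_ge //; exact: Bb_cst.
Qed.

Lemma lee_EFin_subr {R : realType} (a b : R) (h : \bar R) :
  ((a - b)%:E <= h)%E -> (a%:E - h <= b%:E)%E.
Proof. by case: h => [r| |] //=; rewrite ?lee_fin ?leNye //; lra. Qed.

Section premium_duality.
Context {d : measure_display} {T : measurableType d} {R : realType}.
Variables (C : set (T -> R)) (H : (T -> R) -> R).
Hypotheses (hC : linear_subspace_with_constants C) (hH : premium_principle C H)
  (H_convex : convex_on C H).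

Lemma Hstar_ge P Y : C Y -> ((ba_integral P Y - H Y)%:E <= Hstar C H P)%E.
Proof. by move=> CY; apply: ereal_sup_ubound; exists Y. Qed.

Lemma ba_integral_sub_RMax_le P X : ba_prob P -> Bb X ->
  ((ba_integral P X - RMax C H X)%:E <= Hstar C H P)%E.
Proof.
move=> hP bX; have Hstar_gtNy := Hstar_ge P (hC.2.2.2 0).
case: (Hstar C H P) (Hstar_ge P) Hstar_gtNy => [r| |] // Hge _; last by rewrite leey.
rewrite lee_fin lerBlDr -lerBlDl; apply: (RMax_ge hC) => // Y CY XY.
have := Hge Y CY; rewrite lee_fin lerBlDl => EY.
by have := ba_integral_le_le hP bX (C_Bb hC CY) XY; lra.
Qed.

Lemma Hstar_RMax P : ba_prob P ->
  Hstar C H P = ereal_sup [set (ba_integral P X - RMax C H X)%:E | X in Bb].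
Proof.
move=> hP; apply/eqP; rewrite eq_le; apply/andP; split; apply: ge_ereal_sup.
  move=> _ [Y CY <-]; apply: le_ereal_sup_tmp; exists (ba_integral P Y - RMax C H Y)%:E.
    by exists Y; first exact: (C_Bb hC CY).
  by rewrite lee_fin lerD2l lerN2 (RMax_le_H hC hH (C_Bb hC CY) CY).
by move=> _ [X bX <-]; exact: ba_integral_sub_RMax_le.
Qed.

Lemma RMax_attained X : Bb X ->
  exists2 P, ba_prob P & (RMax C H X)%:E = ((ba_integral P X)%:E - Hstar C H P)%E.
Proof.
move=> bX; have RMax_cvx := RMax_convex hC hH H_convex.
have [l l_lin l_sub] := convex_subgradient Bb0 Bb_add Bb_scale RMax_cvx bX.
have [l_cst l_ge0] := subgradient_cash_normalized (RMax_le_le hC hH) (RMax_add_cst hC hH)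
  bX l_lin l_sub.
pose P := functional_prob l; have hP : ba_prob P := ba_prob_functional l_lin l_cst l_ge0.
have EP := ba_integral_functional l_lin l_cst l_ge0.
exists P => //.
have Hstar_le : (Hstar C H P <= (l X - RMax C H X)%:E)%E.
  apply: ge_ereal_sup => _ [Y CY <-]; have bY := C_Bb hC CY.
  rewrite lee_fin EP //; have := l_sub (Y - X) (Bb_add bY (Bb_opp bX)).
  rewrite subrKC (linear_onB Bb_scale) // => lYX.
  by have := RMax_le_H hC hH bY CY (fun x => lexx (Y x)); lra.
have := ba_integral_sub_RMax_le hP bX; rewrite EP //.
case: (Hstar C H P) Hstar_le => [r| |] //; rewrite !lee_fin => rle rge.
by rewrite -EFinB; congr EFin; lra.
Qed.

End premium_duality.

Theorem theorem3p1 (d : measure_display) (T : measurableType d) (R : realType)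
  (C : set (T -> R)) (H : (T -> R) -> R) :
  linear_subspace_with_constants C ->
  premium_principle C H ->
  convex_on C H ->
  (forall X : T -> R, Bb X ->
     (exists2 P : set T -> R, ba_prob P &
        ((RMax C H X)%:E = ((ba_integral P X)%:E - Hstar C H P)%E)) /\
     (forall P : set T -> R, ba_prob P ->
        ((ba_integral P X)%:E - Hstar C H P <= (RMax C H X)%:E)%E)) /\
  (forall P : set T -> R, ba_prob P ->
     Hstar C H P =
       ereal_sup [set ((ba_integral P X - RMax C H X)%:E) | X in (@Bb d T R)]).
Proof.
move=> hC hH H_convex; split=> [X bX|P hP]; last exact: Hstar_RMax.
split=> [|P hP]; first exact: RMax_attained.
exact/lee_EFin_subr/ba_integral_sub_RMax_le.
Qed.
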